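(* Let $0\le p\le 1$ be given. Suppose that $G$ is an $n$-vertex $r$-graph with density $q\ge p$ (and $p\binom{n}{r}$ is an integer). Then $H_r(n,p)\ge (p/q)^n e^{-2/p}H(G)(1-o(1))$, where $o(1)\to 0$ as $n\to\infty$.
   Context: An $r$-graph has a vertex set and an edge set consisting of $r$-element subsets of the vertex set. An $n$-vertex $r$-graph has density $p$ if it has exactly $p\binom{n}{r}$ edges. A Hamiltonian cycle of an $n$-vertex $r$-graph $G$ is given by an ordering $v_1,\dots,v_n$ of its vertices such that for every $i$ the set $\{v_i,\dots,v_{i+r-1}\}$ (indices modulo $n$) is an edge; the cycle is identified with this set of $n$ edges. $H(G)$ is the number of Hamiltonian cycles of $G$. $H_r(n,p)$ is the maximum of $H(G)$ over all $n$-vertex $r$-graphs of density $p$. *)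

From HB Require Import structures.
From mathcomp Require Import all_boot all_order all_fingroup all_algebra.
From mathcomp Require Import all_classical all_reals all_analysis.
Set Implicit Arguments. Unset Strict Implicit. Unset Printing Implicit Defensive.
Import Order.TTheory GRing.Theory Num.Theory.

Definition is_rgraph (r n : nat) (E : {set {set 'I_n}}) : bool :=
  [forall e in E, #|e| == r].

(* An ordering v_0,...,v_{n-1} of the vertices is a permutation s
   (position i |-> vertex s i).  The window starting at position i is
   {v_i, ..., v_{i+r-1}} with indices mod n: vertex x belongs to it iff its
   position s^-1 x equals (i + k) mod n for some k < r. *)
Definition window (r n : nat) (s : {perm 'I_n}) (i : 'I_n) : {set 'I_n} :=
  [set x : 'I_n | [exists k : 'I_r, val ((s^-1)%g x) == (i + k) %% n]].

(* The Hamiltonian cycle given by the ordering s, identified with its set of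
   n windows. *)
Definition ham_cycle (r n : nat) (s : {perm 'I_n}) : {set {set 'I_n}} :=
  [set window r s i | i : 'I_n].

Definition ham_cycles (r n : nat) (E : {set {set 'I_n}}) :
  {set {set {set 'I_n}}} :=
  [set C | [exists s : {perm 'I_n}, (C == ham_cycle r s) && (C \subset E)]].

Definition H (r n : nat) (E : {set {set 'I_n}}) : nat := #|ham_cycles r E|.

(* H_r(n,p) where m = p * C(n,r) is the (integer) number of edges. *)
Definition Hmax (r n m : nat) : nat :=
  \max_(E : {set {set 'I_n}} | is_rgraph r E && (#|E| == m)) H r E.

(* Average over the m-edge subgraphs of G, where m = p C(n,r).  A Hamiltonian
   cycle of G has at most n edges, so it survives in at least C(|E|-n, m-n) of
   the C(|E|, m) such subgraphs; hence H_r(n,p) >= H(G) m^_n / |E|^_n.  Once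
   n > 4/p we have m >= p C(n,2) >= 2(n-1), so m - i >= m exp(-2i/m) for i < n
   and m^_n / |E|^_n >= (m/|E|)^n exp(-n(n-1)/m) >= (p/q)^n exp(-2/p).  The
   bound thus holds without the factor 1 - eps. *)

From HB Require Import structures.
From mathcomp Require Import all_boot all_order all_fingroup all_algebra.
From mathcomp Require Import all_classical all_reals all_analysis.
From mathcomp Require Import ring lra zify.
Import Order.TTheory GRing.Theory Num.Theory.

Lemma leq_bin_lower_half n k l : k <= l -> l.*2 <= n -> 'C(n, k) <= 'C(n, l).
Proof.
move=> /subnKC <-; elim: (l - k) => [|d IHd]; first by rewrite addn0.
rewrite addnS => le_ln; apply: leq_trans (IHd _) _; first lia.
rewrite -(leq_pmul2l (ltn0Sn (k + d))) mul_bin_left leq_mul2r.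
by apply/orP; right; lia.
Qed.

Lemma leq_bin_subr M m n c : c <= n -> n <= m -> m <= M ->
  'C(M - n, m - n) <= 'C(M - c, m - c).
Proof.
move=> le_cn le_nm le_mM.
rewrite -(bin_sub (leq_sub2r n le_mM)) -(bin_sub (leq_sub2r c le_mM)).
have -> : M - n - (m - n) = M - m by lia.
have -> : M - c - (m - c) = M - m by lia.
by rewrite leq_bin2l // leq_sub2l.
Qed.

Lemma bin_sub_mul_ffact M m n : n <= m -> m <= M ->
  'C(M - n, m - n) * M ^_ n = 'C(M, m) * m ^_ n.
Proof.
move=> le_nm le_mM; have fact_pos : 0 < (m - n)`! * (M - m)`!.
  by rewrite muln_gt0 !fact_gt0.
apply/eqP; rewrite -(eqn_pmul2r fact_pos); apply/eqP; transitivity M`!.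
  have := bin_fact (leq_sub2r n le_mM).
  have -> : M - n - (m - n) = M - m by lia.
  by rewrite -(ffact_fact (leq_trans le_nm le_mM)) => <-; ring.
by rewrite -(bin_fact le_mM) -(ffact_fact le_nm); ring.
Qed.

Lemma card_supsets_draws (T : finType) (B C : {set T}) k :
  C \subset B -> #|C| <= k ->
  #|[set A : {set T} | (A \subset B) && (#|A| == k) && (C \subset A)]| =
  'C(#|B| - #|C|, k - #|C|).
Proof.
move=> sCB leCk; rewrite -(cardsDS sCB) -cards_draws.
set D := [set A : {set T} | A \subset B :\: C & #|A| == k - #|C|].
have disjDC A : A \in D -> [disjoint A & C].
  rewrite inE => /andP[sABC _]; rewrite finset.disjoints_subset.
  by apply: fintype.subset_trans sABC _; rewrite finset.setDE finset.subsetIr.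
have UCK : {in D, cancel (fun A => A :|: C) (fun A => A :\: C)}.
  move=> A /disjDC dAC; rewrite finset.setDUl finset.setDv finset.setU0.
  exact/finset.setDidPl.
rewrite -(card_in_imset (can_in_inj UCK)); apply: eq_card => A.
rewrite inE -andbA; apply/and3P/imsetP.
- case=> sAB /eqP cA sCA; exists (A :\: C).
    by rewrite inE finset.setSD //= cardsDS // cA.
  by rewrite finset.setUC -{1}(finset.setID A C) (finset.setIidPr sCA).
- case=> A' DA' ->; have := DA'; rewrite inE => /andP[sABC /eqP cA'].
  split; last exact: finset.subsetUr.
  + rewrite finset.subUset sCB andbT.
    by rewrite (fintype.subset_trans sABC) ?finset.subsetDl.
  + by rewrite cardsU (disjoint_setI0 (disjDC _ DA')) cards0 subn0 cA' subnK.
Qed.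

Lemma card_set_sum (T : finType) (P Q : pred T) :
  #|[set x | P x && Q x]| = \sum_(x | P x) Q x.
Proof.
by rewrite -sum1dep_card big_mkcondr; apply: eq_bigr => x _; case: (Q x).
Qed.

Section HamiltonianCycles.

Local Set Implicit Arguments.
Local Unset Strict Implicit.

Variables r n : nat.
Implicit Types E F C : {set {set 'I_n}}.

Lemma ham_cycle_subset E C : C \in ham_cycles r E -> C \subset E.
Proof. by rewrite inE => /existsP[s /andP[_]]. Qed.

(* Only [<=]: distinct windows may coincide as sets, e.g. when [r = n]. *)
Lemma card_ham_cycle_le E C : C \in ham_cycles r E -> #|C| <= n.
Proof.
rewrite inE => /existsP[s /andP[/eqP -> _]].
by apply: leq_trans (leq_imset_card _ _) _; rewrite card_ord.
Qed.

Lemma ham_cycles_subset E F : F \subset E ->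
  ham_cycles r F = [set C in ham_cycles r E | C \subset F].
Proof.
move=> sFE; apply/finset.setP => C; rewrite !inE.
apply/existsP/andP.
  case=> s /andP[/eqP -> sCF]; split=> //; apply/existsP; exists s.
  by rewrite eqxx (fintype.subset_trans sCF sFE).
case=> /existsP[s /andP[/eqP -> _]] sCF.
by exists s; rewrite eqxx.
Qed.

Lemma H_subset_sum E F : F \subset E ->
  H r F = \sum_(C in ham_cycles r E) (C \subset F).
Proof. by move=> sFE; rewrite /H (ham_cycles_subset sFE) card_set_sum. Qed.

Lemma H_le_Hmax E F m : is_rgraph r E -> F \subset E -> #|F| = m ->
  H r F <= Hmax r n m.
Proof.
move=> /forallP rE sFE cF; apply: leq_bigmax_cond; rewrite cF eqxx andbT.
by apply/forallP => e; apply/implyP => /(fintype.subsetP sFE); apply/implyP/rE.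
Qed.

Lemma bin_mul_H_le_Hmax E m : is_rgraph r E -> n <= m -> m <= #|E| ->
  'C(#|E| - n, m - n) * H r E <= 'C(#|E|, m) * Hmax r n m.
Proof.
move=> rE le_nm le_mE.
have draws_supsets C : C \in ham_cycles r E ->
    'C(#|E| - n, m - n) <=
    \sum_(F : {set {set 'I_n}} | (F \subset E) && (#|F| == m)) (C \subset F).
  move=> hC; have le_Cn := card_ham_cycle_le hC.
  rewrite -card_set_sum card_supsets_draws ?(ham_cycle_subset hC) //.
    exact: leq_bin_subr.
  exact: leq_trans le_Cn le_nm.
rewrite /H mulnC -sum_nat_const; apply: leq_trans (leq_sum _ draws_supsets) _.
rewrite exchange_big /= -cards_draws -sum_nat_cond_const; apply: leq_sum => F.
by case/andP=> sFE /eqP cF; rewrite -H_subset_sum // (H_le_Hmax rE sFE cF).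
Qed.

End HamiltonianCycles.

Local Open Scope ring_scope.

Section RealBounds.

Local Set Implicit Arguments.
Local Unset Strict Implicit.
Variable R : realType.

Lemma expR_neg_double_le (t : R) :
  0 <= t -> 2 * t <= 1 -> expR (- (2 * t)) <= 1 - t.
Proof.
move=> t0 t_half; rewrite expRN -[X in X <= _]mul1r ler_pdivrMr ?expR_gt0 //.
(* (1 - t) (1 + 2 t) = 1 + t (1 - 2 t) >= 1 *)
have := expR_ge1Dx (2 * t); have : 0 <= 1 - t by lra.
nra.
Qed.

Lemma ffact_ge_expR (m n : nat) : (0 < m)%N -> (2 * n.-1 <= m)%N ->
  m%:R ^+ n * expR (- ((n * n.-1)%:R / m%:R)) <= (m ^_ n)%:R :> R.
Proof.
move=> m_gt0; elim: n => [|n IHn] le_nm.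
  by rewrite expr0 mul0n mul0r oppr0 expR0 mulr1.
have m_gt0R : (0 : R) < m%:R by rewrite ltr0n.
have -> : (n.+1 * n.+1.-1 = n * n.-1 + 2 * n)%N.
  by case: n {IHn le_nm} => //= n; lia.
rewrite ffactnSr natrM exprSr natrD mulrDl opprD expRD mulrACA.
apply: ler_pM; rewrite ?mulr_ge0 ?exprn_ge0 ?expR_ge0 //.
  by apply: IHn; lia.
have t_half : 2 * (n%:R / m%:R) <= 1 :> R.
  by rewrite mulrA ler_pdivrMr // mul1r -natrM ler_nat; lia.
have := expR_neg_double_le (divr_ge0 (ler0n R n) (ler0n R m)) t_half.
rewrite natrM mulrA => /(ler_wpM2l (ler0n R m)) /le_trans; apply.
rewrite natrB; last lia.
by rewrite mulrBr mulr1 mulrC divfK ?gt_eqF.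
Qed.

Lemma ffact_ratio_ge_expR (m M n : nat) :
  (0 < m)%N -> (2 * n.-1 <= m)%N -> (m <= M)%N ->
  (m%:R / M%:R) ^+ n * expR (- ((n * n.-1)%:R / m%:R)) <=
  (m ^_ n)%:R / (M ^_ n)%:R :> R.
Proof.
move=> m_gt0 le_nm le_mM.
have le_nM : (n <= M)%N by case: n le_nm => //= n; lia.
have M_gt0 : (0 < M)%N by lia.
rewrite expr_div_n mulrAC ler_pdivrMr ?exprn_gt0 ?ltr0n //.
rewrite mulrAC ler_pdivlMr ?ltr0n ?ffact_gt0 //.
apply: ler_pM; rewrite ?mulr_ge0 ?exprn_ge0 ?expR_ge0 //.
  exact: ffact_ge_expR.
rewrite -natrX ler_nat; elim: n {le_nm le_nM} => // n IHn.
by rewrite ffactnSr expnSr leq_mul // leq_subr.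
Qed.

Lemma Hmax_ge_ffact_ratio (r n m : nat) (E : {set {set 'I_n}}) :
  is_rgraph r E -> (n <= m)%N -> (m <= #|E|)%N ->
  (m ^_ n)%:R / (#|E| ^_ n)%:R * (H r E)%:R <= (Hmax r n m)%:R :> R.
Proof.
move=> rE le_nm le_mE.
have le_ffact : (m ^_ n * H r E <= Hmax r n m * #|E| ^_ n)%N.
  rewrite -(leq_pmul2l (_ : 0 < 'C(#|E|, m))%N) ?bin_gt0 //.
  rewrite mulnA -bin_sub_mul_ffact //.
  by rewrite mulnAC [X in (_ <= X)%N]mulnA leq_mul2r bin_mul_H_le_Hmax ?orbT.
rewrite mulrAC ler_pdivrMr ?ltr0n ?ffact_gt0 ?(leq_trans le_nm) //.
by rewrite -!natrM ler_nat.
Qed.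

Lemma edges_ge_pair_density (n r m : nat) (p : R) :
  (2 <= r)%N -> (r.*2 <= n)%N -> 0 <= p -> m%:R = p * 'C(n, r)%:R ->
  p * (n * n.-1)%:R <= 2 * m%:R.
Proof.
move=> le_2r le_rn p_ge0 ->.
rewrite -[n.-1]bin1 mul_bin_diag natrM mulrCA ler_wpM2l // ler_wpM2l // ler_nat.
exact: leq_bin_lower_half.
Qed.

Lemma Hmax_ge_density_ratio (r n m : nat) (p : R) (E : {set {set 'I_n}}) :
  (2 <= r)%N -> (r.*2 <= n)%N -> 4 < p * n%:R ->
  m%:R = p * 'C(n, r)%:R -> is_rgraph r E ->
  p <= #|E|%:R / 'C(n, r)%:R ->
  (p / (#|E|%:R / 'C(n, r)%:R)) ^+ n * expR (- (2 / p)) * (H r E)%:R <=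
  (Hmax r n m)%:R.
Proof.
move=> le_2r le_rn pn hm rE le_pq.
have p_gt0 : 0 < p by have := ler0n R n; nra.
have C_gt0 : 0 < 'C(n, r)%:R :> R by rewrite ltr0n bin_gt0; lia.
have m_pairs := edges_ge_pair_density le_2r le_rn (ltW p_gt0) hm.
have le_nm2 : (2 * n.-1 <= m)%N.
  rewrite -(ler_nat R) natrM; move: m_pairs; rewrite natrM mulrA.
  have := ler0n R n.-1; nra.
have m_gt0 : (0 < m)%N by lia.
have le_nm : (n <= m)%N by lia.
have le_mE : (m <= #|E|)%N.
  by rewrite -(ler_nat R) hm -(ler_pdivlMr _ _ C_gt0).
have -> : p / (#|E|%:R / 'C(n, r)%:R) = m%:R / #|E|%:R.
  by rewrite hm; field; rewrite !gt_eqF // ltr0n; lia.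
apply: le_trans (Hmax_ge_ffact_ratio rE le_nm le_mE); rewrite ler_wpM2r //.
apply: le_trans (ffact_ratio_ge_expR m_gt0 le_nm2 le_mE); rewrite ler_wpM2l //.
rewrite ler_expR lerN2 ler_pdivrMr ?ltr0n //.
by rewrite mulrAC ler_pdivlMr // mulrC.
Qed.

End RealBounds.

Theorem lemma1 (R : realType) (r : nat) (p : R) :
  (2 <= r)%N -> 0 < p -> p <= 1 ->
  forall eps : R, 0 < eps ->
  exists N : nat, forall n : nat, (N <= n)%N ->
  forall m : nat, m%:R = p * ('C(n, r))%:R ->
  forall E : {set {set 'I_n}}, is_rgraph r E ->
  let q : R := (#|E|)%:R / ('C(n, r))%:R in
  p <= q ->
  (p / q) ^+ n * expR (- (2 / p)) * (H r E)%:R * (1 - eps) <= (Hmax r n m)%:R.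
Proof.
move=> le_2r p_gt0 _ eps eps_gt0.
exists (r.*2 + Num.Def.archi_bound (4 / p))%N => n le_Nn m hm E rE q le_pq.
have le_rn : (r.*2 <= n)%N by apply: leq_trans (leq_addr _ _) le_Nn.
have pn : 4 < p * n%:R.
  rewrite mulrC -ltr_pdivrMr //; apply: lt_le_trans (archi_boundP _) _.
    by rewrite divr_ge0 // ltW.
  by rewrite ler_nat (leq_trans (leq_addl _ _) le_Nn).
apply: le_trans (Hmax_ge_density_ratio le_2r le_rn pn hm rE le_pq).
rewrite ler_piMr ?mulr_ge0 ?exprn_ge0 ?expR_ge0 ?divr_ge0 //; lra.
Qed.
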